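(* Let $X,Y$ be Banach spaces over $\mathbb{K}\in\{\mathbb{R},\mathbb{C}\}$ and let $G\in L(X,Y)$ with $\|G\|=1$. Then for every $T\in L(X,Y)$, \[ \|T\|_G=\max\{|\lambda|:\lambda\in S_G(T)\}=\max\{\lambda:\lambda\in \widetilde{S}_G(T)\}, \] where \[ S_G(T):=\bigcap_{\delta>0}\overline{\{y^*(Tx): x\in S_X,\ y^*\in S_{Y^*},\ \|Gx\|>1-\delta\}},\qquad \widetilde{S}_G(T):=\bigcap_{\delta>0}\overline{\{\|Tx\|: x\in S_X,\ \|Gx\|>1-\delta\}}. \]
   Context: $S_X$ denotes the unit sphere of $X$, $Y^*$ the dual of $Y$, and $L(X,Y)$ the space of bounded linear operators with the operator norm. For $G\in L(X,Y)$ with $\|G\|=1$ and $T\in L(X,Y)$, the $G$-(semi)norm is $\|T\|_G := \inf_{\delta>0}\sup\{\|Tx\|: x\in S_X,\ \|Gx\|>1-\delta\}$. *)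

From HB Require Import structures.
From mathcomp Require Import all_boot all_order all_algebra.
From mathcomp Require Import all_classical all_reals all_analysis.
From mathcomp.real_closed Require Export complex.
Import Order.TTheory GRing.Theory Num.Theory.
Import numFieldNormedType.Exports.
Local Open Scope classical_set_scope.
Local Open Scope ring_scope.

Set Implicit Arguments.
Unset Strict Implicit.
Unset Printing Implicit Defensive.

Section GNorm.
Variable K : numFieldType.

Definition opnorm (X Y : normedModType K) (f : X -> Y) : K :=
  supremum 0 [set `|f x| | x in [set x : X | `|x| <= 1]].

Variables X Y : normedModType K.

Definition Gnorm (G T : X -> Y) : K :=
  infimum 0
    [set supremum 0 [set `|T x| | x in [set x : X | `|x| = 1 /\ 1 - d < `|G x|]]
    | d in [set d : K | 0 < d]].

Definition SG (G T : X -> Y) : set K :=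
  \bigcap_(d in [set d : K | 0 < d])
    closure [set z : K | exists (x : X) (ys : {linear Y -> K^o}),
               [/\ continuous ys, opnorm ys = 1, `|x| = 1,
                   1 - d < `|G x| & z = ys (T x)]].

Definition SGt (G T : X -> Y) : set K :=
  \bigcap_(d in [set d : K | 0 < d])
    closure [set `|T x| | x in [set x : X | `|x| = 1 /\ 1 - d < `|G x|]].

End GNorm.

Definition is_max (K : numFieldType) (A : set K) (m : K) : Prop :=
  A m /\ forall a, A a -> a <= m.

(* For d > 0 let s(d) be the supremum of ||T x|| over the slab of unit vectors
   x with ||G x|| > 1 - d.  The slabs are nonempty because ||G|| = 1, s is
   nondecreasing, and ||T||_G = inf_d s(d).  Choosing d with s(d) close to
   ||T||_G, and then x in the slab with ||T x|| close to s(d), puts ||T||_G in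
   every closure defining tilde S_G(T); conversely every point of such a
   closure is bounded by s(d).  A norm-one functional y* with
   y*(T x) = ||T x|| (Hahn-Banach) gives tilde S_G(T) <= S_G(T), and
   |y*(T x)| <= ||T x|| bounds |S_G(T)| by ||T||_G.
   Only two properties of the scalars enter: bounded sets of nonnegative
   scalars have suprema, and vectors are normed by functionals; for complex
   scalars the latter follows from the real Hahn-Banach theorem applied to
   the real part. *)

From HB Require Import structures.
From mathcomp Require Import all_boot all_order all_algebra.
From mathcomp Require Import all_classical all_reals all_analysis.
From mathcomp Require Import lra ring.
Import Order.TTheory GRing.Theory Num.Theory.
From mathcomp.real_closed Require Import complex.
Import numFieldNormedType.Exports.
Local Open Scope classical_set_scope.
Local Open Scope ring_scope.
Local Open Scope complex_scope.

Set Implicit Arguments.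
Unset Strict Implicit.
Unset Printing Implicit Defensive.

Section NumFieldFacts.
Variable K : numFieldType.

Lemma closure_normP (A : set K) a :
  closure A a <-> forall e, 0 < e -> exists2 b, A b & `|a - b| < e.
Proof.
split=> [clA e e0|approx B /nbhs_ballP[e e0 aeB]].
  have [|b [Ab]] := clA (ball a e); first exact: nbhsx_ballx.
  by rewrite -ball_normE; exists b.
have [b Ab ab] := approx e e0; exists b; split => //.
by apply: aeB; rewrite -ball_normE.
Qed.

Lemma closure_norm_le (A : set K) s a :
  (forall b, A b -> `|b| <= s) -> closure A a -> `|a| <= s.
Proof.
move=> As /closure_normP clA; apply/ler_addgt0Pr => e e0.
have [b Ab ab] := clA e e0.
rewrite -(subrK b a) (le_trans (ler_normD _ _)) // addrC lerD ?As ?ltW //.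
Qed.

Lemma closure_ge0 (A : set K) a :
  (forall b, A b -> 0 <= b) -> closure A a -> 0 <= a.
Proof.
move=> A0 /closure_normP clA.
suff : `|a - `|a| | <= 0 by rewrite normr_le0 subr_eq0 => /eqP ->.
apply/ler_addgt0Pr => e e0; rewrite add0r.
have [b Ab ab] := clA (e / 2) (divr_gt0 e0 (ltr0Sn _ 1)).
have dab : `| `|b| - `|a| | <= `|a - b| by rewrite distrC ler_dist_dist.
rewrite (ger0_norm (A0 _ Ab)) in dab.
by rewrite (splitr e) (le_trans (ler_distD b _ _)) // lerD // ltW // (le_lt_trans dab).
Qed.

Lemma supremum_eq (A : set K) s x0 : A !=set0 -> supremums A s -> supremum x0 A = s.
Proof.
move=> /set0P A0 sA; rewrite /supremum (negbTE A0).
exact: xget_subset1 sA (@is_subset1_supremums _ _ A).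
Qed.

Lemma infimum_eq (A : set K) s x0 : A !=set0 -> infimums A s -> infimum x0 A = s.
Proof.
move=> /set0P A0 sA; rewrite /infimum (negbTE A0).
exact: xget_subset1 sA (@is_subset1_infimums _ _ A).
Qed.

Lemma supremums_neq0 (A : set K) s : supremum 0 A = s -> s != 0 -> supremums A s.
Proof.
rewrite /supremum; case: ifP => [_ <-|_]; first by rewrite eqxx.
by case: xgetP => [x -> Ax <- //|_ <-]; rewrite eqxx.
Qed.

Lemma supremums_approx (A : set K) s e :
  (forall a, A a -> a \is Num.real) -> s \is Num.real ->
  supremums A s -> 0 < e -> exists2 a, A a & s - e < a.
Proof.
move=> Areal sreal [_ s_least] e0; apply: contrapT => Nb.
suff /s_least : ubound A (s - e).
  by rewrite lerDl oppr_ge0 => /(lt_le_trans e0); rewrite ltxx.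
move=> a Aa; rewrite real_leNgt ?(Areal _ Aa) ?rpredB ?(gtr0_real e0) //.
by apply/negP => lt_a; apply: Nb; exists a.
Qed.

Lemma infimums_approx (A : set K) i e :
  (forall a, A a -> a \is Num.real) -> i \is Num.real ->
  infimums A i -> 0 < e -> exists2 a, A a & a < i + e.
Proof.
move=> Areal ireal [_ i_great] e0; apply: contrapT => Nb.
suff /i_great : lbound A (i + e) by rewrite gerDl => /(lt_le_trans e0); rewrite ltxx.
move=> a Aa; rewrite real_leNgt ?(Areal _ Aa) ?rpredD ?(gtr0_real e0) //.
by apply/negP => lt_a; apply: Nb; exists a.
Qed.

Definition nonneg_sup_complete := forall A : set K, A !=set0 ->
  (exists b, forall a, A a -> 0 <= a <= b) -> exists s, supremums A s.

Lemma nonneg_infimums_exist : nonneg_sup_complete -> forall E : set K, E !=set0 ->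
  (forall e, E e -> 0 <= e) -> exists i, infimums E i.
Proof.
move=> sup_complete E [e0 Ee0] E_ge0.
pose L := [set l | 0 <= l /\ lbound E l].
have [||s [s_ub s_least]] := sup_complete L.
- by exists 0; split => // e /E_ge0.
- by exists e0 => l [l_ge0 l_lb]; rewrite l_ge0 l_lb.
have s_ge0 : 0 <= s by apply: s_ub; split => // e /E_ge0.
exists s; split => [e Ee|l l_lb]; first by apply: s_least => l [_]; apply.
have l_real : l \is Num.real by rewrite (ler_real (l_lb _ Ee0)) ger0_real ?E_ge0.
have [l_ge0|/ltW l_le0] := real_leP (real0 K) l_real; first exact: s_ub.
exact: le_trans l_le0 s_ge0.
Qed.

Definition norming_functionals := forall (Y : normedModType K) (y : Y),
  exists F : {linear Y -> K^o}, F y = `|y| /\ forall x, `|F x| <= `|x|.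

Lemma opnorm1_le (Y : normedModType K) (F : {linear Y -> K^o}) :
  opnorm F = 1 -> forall y, `|F y| <= `|y|.
Proof.
move=> /supremums_neq0 /(_ (oner_neq0 _)) [F_ub _] y.
have [->|y0] := eqVneq y 0; first by rewrite linear0 !normr0.
have ny : 0 < `|y| by rewrite normr_gt0.
pose u := `|y|^-1 *: y.
have nu : `|u| = 1 by rewrite normrZ normfV normr_id mulVf ?gt_eqF.
have Fu : `|F u| <= 1 by apply: F_ub; exists u => //=; rewrite nu.
have -> : y = `|y| *: u by rewrite /u scalerA mulfV ?gt_eqF // scale1r.
by rewrite linearZ /= normrZ normr_id [`|_ *: u|]normrZ normr_id nu mulr1 ler_piMr.
Qed.

Lemma norming_opnorm1 (Y : normedModType K) (F : {linear Y -> K^o}) (y : Y) :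
  y != 0 -> F y = `|y| -> (forall x, `|F x| <= `|x|) ->
  continuous F /\ opnorm F = 1.
Proof.
move=> y0 Fy Fle; split.
  apply: bounded_linear_continuous; apply/bounded_funP => r.
  by exists r => x xr; exact: le_trans (Fle x) xr.
have ny : 0 < `|y| by rewrite normr_gt0.
pose u := `|y|^-1 *: y.
have nu : `|u| = 1 by rewrite normrZ normfV normr_id mulVf ?gt_eqF.
have Fu : F u = 1 by rewrite linearZ /= Fy; apply: mulVf; rewrite gt_eqF.
apply: supremum_eq; first by exists `|F u|, u => //=; rewrite nu.
split=> [_ [x x1 <-]|b b_ub]; first exact: le_trans (Fle x) x1.
by rewrite -(normr1 K) -Fu; apply: b_ub; exists u => //=; rewrite nu.
Qed.

Lemma norming_functional_opnorm1 : norming_functionals ->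
  forall (Y : normedModType K) (y : Y), (exists y0 : Y, y0 != 0) ->
  exists F : {linear Y -> K^o}, [/\ continuous F, opnorm F = 1 & F y = `|y|].
Proof.
move=> norming Y y [y0 y0_neq0].
have [y_eq0|y_neq0] := eqVneq y 0.
  have [F [Fy0 Fle]] := norming Y y0; have [cF nF] := norming_opnorm1 y0_neq0 Fy0 Fle.
  by exists F; split => //; rewrite y_eq0 linear0 normr0.
have [F [Fy Fle]] := norming Y y; have [cF nF] := norming_opnorm1 y_neq0 Fy Fle.
by exists F.
Qed.

End NumFieldFacts.

Section GnormAttained.
Variable K : numFieldType.
Hypothesis sup_complete : nonneg_sup_complete K.
Hypothesis norming : norming_functionals K.
Variables (X Y : normedModType K) (G T : {linear X -> Y}).
Hypothesis cT : continuous T.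
Hypothesis nG : opnorm G = 1.

Let slab d := [set x : X | `|x| = 1 /\ 1 - d < `|G x|].
Let slab_norms d := [set `|T x| | x in slab d].
Let slab_sup d := supremum 0 (slab_norms d).
Let slab_sups := [set slab_sup d | d in [set d : K | 0 < d]].

Let slab_mono d1 d2 : d1 <= d2 -> slab d1 `<=` slab d2.
Proof. by move=> d12 x [x1 Gx]; split => //; apply: le_lt_trans Gx; exact: lerB. Qed.

Let slab_neq0_le1 d : 0 < d -> d <= 1 -> slab d !=set0.
Proof.
move=> d0 d1; apply: contrapT => slab0.
have [_ G_least] := supremums_neq0 nG (oner_neq0 _).
suff /G_least : ubound [set `|G x| | x in [set x : X | `|x| <= 1]] (1 - d).
  by rewrite lerDl oppr_ge0 => /(lt_le_trans d0); rewrite ltxx.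
move=> _ [x x1 <-]; rewrite real_leNgt ?normr_real ?rpredB ?gtr0_real //.
apply/negP => Gx_gt; apply: slab0.
have Gx0 : 0 < `|G x| by apply: le_lt_trans Gx_gt; rewrite subr_ge0.
have nx : 0 < `|x|.
  by rewrite normr_gt0; apply: contraTneq Gx0 => ->; rewrite linear0 normr0 ltxx.
exists (`|x|^-1 *: x); split; first by rewrite normrZ normfV normr_id mulVf ?gt_eqF.
rewrite linearZ /= normrZ normfV normr_id (lt_le_trans Gx_gt) //.
by rewrite ler_peMl // invf_ge1.
Qed.

Let slab_neq0 d : 0 < d -> slab d !=set0.
Proof.
move=> d0; have [d1|/ltW d1] := real_leP (gtr0_real d0) (real1 K).
  exact: slab_neq0_le1.
by have [x slab_x] := slab_neq0_le1 ltr01 (lexx _); exists x; apply: slab_mono slab_x.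
Qed.

Let slab_norms_ge0 d a : slab_norms d a -> 0 <= a.
Proof. by move=> [x _ <-]. Qed.

Let slab_norms_real d a : slab_norms d a -> a \is Num.real.
Proof. by move/slab_norms_ge0/ger0_real. Qed.

Let slab_supP d : 0 < d -> supremums (slab_norms d) (slab_sup d).
Proof.
move=> d0; have [M T_bd] := (bounded_funP T).2 ((linear_bounded_continuous T).2 cT) 1.
have [x slab_x] := slab_neq0 d0.
have slab_norms_nz : slab_norms d !=set0 by exists `|T x|, x.
have [|s sP] := sup_complete slab_norms_nz.
  by exists M => _ [y [y1 _] <-]; rewrite normr_ge0 T_bd ?y1.
by rewrite /slab_sup (supremum_eq _ slab_norms_nz sP).
Qed.

Let slab_sup_ge0 d : 0 < d -> 0 <= slab_sup d.
Proof.
move=> d0; have [x slab_x] := slab_neq0 d0.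
by apply: le_trans (normr_ge0 (T x)) _; apply: (slab_supP d0).1; exists x.
Qed.

Let slab_sup_mono d1 d2 : 0 < d1 -> d1 <= d2 -> slab_sup d1 <= slab_sup d2.
Proof.
move=> d10 d12; apply: (slab_supP d10).2 => _ [x slab_x <-].
by apply: (slab_supP (lt_le_trans d10 d12)).1; exists x => //; exact: slab_mono slab_x.
Qed.

Let GnormP : infimums slab_sups (Gnorm G T).
Proof.
have slab_sups_nz : slab_sups !=set0 by exists (slab_sup 1), 1 => //; exact: ltr01.
have [|i iP] := nonneg_infimums_exist sup_complete slab_sups_nz.
  by move=> _ [d d0 <-]; exact: slab_sup_ge0.
by rewrite /Gnorm -/(slab _) (infimum_eq _ slab_sups_nz iP).
Qed.

Let Gnorm_ge0 : 0 <= Gnorm G T.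
Proof. by apply: GnormP.2 => _ [d d0 <-]; exact: slab_sup_ge0. Qed.

Let Gnorm_in_SGt : SGt G T (Gnorm G T).
Proof.
move=> d d0 /=; apply/closure_normP => e e0.
have slab_sups_real a : slab_sups a -> a \is Num.real.
  by move=> [d' d'0 <-]; exact/ger0_real/slab_sup_ge0.
have [_ [d' d'0 <-] sup_d'] :=
  infimums_approx slab_sups_real (ger0_real Gnorm_ge0) GnormP e0.
have [d1 d10 [d1d sup_d1]] : exists2 d1, 0 < d1 & d1 <= d /\ slab_sup d1 < Gnorm G T + e.
  have [d'd|/ltW dd'] := real_leP (gtr0_real d'0) (gtr0_real d0); first by exists d'.
  by exists d => //; split => //; apply: le_lt_trans (slab_sup_mono d0 dd') sup_d'.
have [_ [x slab_x <-] Tx_gt] := supremums_approx (@slab_norms_real d1)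
  (ger0_real (slab_sup_ge0 d10)) (slab_supP d10) e0.
exists `|T x|; first by exists x => //; exact: slab_mono slab_x.
have Tx_le : `|T x| <= slab_sup d1 by apply: (slab_supP d10).1; exists x.
have Gnorm_le : Gnorm G T <= slab_sup d1 by apply: GnormP.1; exists d1.
rewrite real_ltr_distl ?rpredB ?normr_real ?(ger0_real Gnorm_ge0) //.
by rewrite ltrBlDr (le_lt_trans Tx_le) //= (le_lt_trans Gnorm_le) // -ltrBlDr.
Qed.

Let SGt_le_Gnorm a : SGt G T a -> a <= Gnorm G T.
Proof.
move=> SGt_a; have a_ge0 : 0 <= a := closure_ge0 (@slab_norms_ge0 1) (SGt_a 1 ltr01).
apply: GnormP.2 => _ [d d0 <-]; rewrite -(ger0_norm a_ge0).
apply: closure_norm_le (SGt_a d d0) => b slab_b.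
by rewrite ger0_norm ?(slab_norms_ge0 slab_b) //; exact: (slab_supP d0).1.
Qed.

Let SGt_sub_SG : SGt G T `<=` SG G T.
Proof.
move=> a SGt_a d d0; apply: closureS (SGt_a d d0) => _ [x [x1 Gx] <-].
have [|F [cF nF Fy]] := norming_functional_opnorm1 norming (T x).
  (* Y is nontrivial because ||G|| = 1. *)
  have [x' [_ Gx']] := slab_neq0 ltr01.
  by exists (G x'); rewrite -normr_gt0; apply: le_lt_trans Gx'; rewrite subrr.
by exists x, F; split; rewrite ?Fy.
Qed.

Let SG_norm_le_Gnorm l : SG G T l -> `|l| <= Gnorm G T.
Proof.
move=> SG_l; apply: GnormP.2 => _ [d d0 <-].
apply: closure_norm_le (SG_l d d0) => _ [x [F [cF nF x1 Gx ->]]].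
apply: le_trans (opnorm1_le nF (T x)) _.
by apply: (slab_supP d0).1; exists x.
Qed.

Theorem Gnorm_attained :
  is_max [set `|l| | l in SG G T] (Gnorm G T) /\ is_max (SGt G T) (Gnorm G T).
Proof.
split; split.
- by exists (Gnorm G T); [exact: SGt_sub_SG | exact: ger0_norm].
- by move=> _ [l SG_l <-]; exact: SG_norm_le_Gnorm.
- exact: Gnorm_in_SGt.
- exact: SGt_le_Gnorm.
Qed.

End GnormAttained.

Section HahnBanach.
Variables (R : realType) (V : lmodType R) (p : V -> R).
Hypothesis pD : forall u v, p (u + v) <= p u + p v.
Hypothesis pZ : forall a v, 0 <= a -> p (a *: v) = a * p v.

Let p0 : p 0 = 0.
Proof. by rewrite -(scale0r (0 : V)) pZ // mul0r. Qed.

Let pN v : - p v <= p (- v).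
Proof. by have := pD v (- v); rewrite subrr p0; lra. Qed.

Definition dominated_graph (A : set (V * R)) :=
  [/\ forall x r s, A (x, r) -> A (x, s) -> r = s,
      forall x r y s, A (x, r) -> A (y, s) -> A (x + y, r + s),
      forall a x r, A (x, r) -> A (a *: x, a * r) &
      forall x r, A (x, r) -> r <= p x].

Lemma dominated_graph_bigcup (F : set (set (V * R))) :
  F `<=` dominated_graph -> total_on F subset ->
  dominated_graph (\bigcup_(A in F) A).
Proof.
move=> Fd Ftot.
have common u v : (\bigcup_(A in F) A) u -> (\bigcup_(A in F) A) v ->
    exists2 A, F A & A u /\ A v.
  move=> [A FA Au] [B FB Bv].
  by have [AB|BA] := Ftot _ _ FA FB; [exists B => //; split => //; apply: AB |
                                      exists A => //; split => //; apply: BA].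
split.
- move=> x r s /common/[apply] -[A /Fd[fA _ _ _] [Ar As]]; exact: fA Ar As.
- move=> x r y s /common/[apply] -[A FA [Ax Ay]]; exists A => //.
  by case: (Fd _ FA) => _ aA _ _; exact: aA.
- move=> a x r [A FA Ax]; exists A => //.
  by case: (Fd _ FA) => _ _ sA _; exact: sA.
- by move=> x r [A /Fd[_ _ _ dA] Ax]; exact: dA.
Qed.

Lemma dominated_graph_extension_bound (A : set (V * R)) z :
  dominated_graph A -> A !=set0 ->
  exists c, (forall x r, A (x, r) -> r - p (x - z) <= c) /\
            (forall y s, A (y, s) -> c <= p (y + z) - s).
Proof.
move=> [_ addA _ domA] [[x0 r0] Ax0].
(* Any c with sup L <= c <= inf (p (y + z) - s) works; the gap is nonnegative
   because r + s <= p (x + y) <= p (x - z) + p (y + z). *)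
pose L := [set xr.2 - p (xr.1 - z) | xr in A].
have Lub y s : A (y, s) -> ubound L (p (y + z) - s).
  move=> Ays _ [[x r] Axr <-] /=.
  have := domA _ _ (addA _ _ _ _ Axr Ays).
  have -> : x + y = x - z + (y + z) by rewrite addrCA subrK addrC.
  have := pD (x - z) (y + z); lra.
have supL : has_sup L.
  by split; [exists (r0 - p (x0 - z)), (x0, r0) | exists (p (x0 + z) - r0); exact: Lub].
exists (sup L); split => [x r Axr|y s Ays].
  by apply: sup_upper_bound => //; exists (x, r).
by apply: ge_sup (Lub _ _ Ays); case: supL.
Qed.

Lemma extension_dominated (A : set (V * R)) z c :
  dominated_graph A ->
  (forall x r, A (x, r) -> r - p (x - z) <= c) ->
  (forall y s, A (y, s) -> c <= p (y + z) - s) ->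
  forall x r t, A (x, r) -> r + t * c <= p (x + t *: z).
Proof.
move=> [_ _ sA domA] cge cle x r t Axr.
have [t0|t0|->] := ltgtP t 0; last by rewrite mul0r scale0r !addr0; exact: domA.
- have u0 : 0 < - t by rewrite oppr_gt0.
  have := cge _ _ (sA (- t)^-1 _ _ Axr).
  have -> : p (x + t *: z) = - t * p ((- t)^-1 *: x - z).
    by rewrite -pZ ?ltW // scalerBr scalerA mulfV ?gt_eqF // scale1r scaleNr opprK.
  move=> /(ler_wpM2l (ltW u0)); rewrite mulrBr mulrA mulfV ?gt_eqF // mul1r.
  lra.
- have := cle _ _ (sA t^-1 _ _ Axr).
  have -> : p (x + t *: z) = t * p (t^-1 *: x + z).
    by rewrite -pZ ?ltW // scalerDr scalerA mulfV ?gt_eqF // scale1r.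
  move=> /(ler_wpM2l (ltW t0)); rewrite mulrBr mulrA mulfV ?gt_eqF // mul1r.
  lra.
Qed.

Lemma dominated_graph_extend (A : set (V * R)) z :
  dominated_graph A -> A !=set0 -> (forall r, ~ A (z, r)) ->
  exists2 B, A `<` B & dominated_graph B.
Proof.
move=> dA A0 Nz; have [fA addA sA _] := dA.
have [c [cge cle]] := dominated_graph_extension_bound z dA A0.
pose B := [set u | exists x r t, A (x, r) /\ u = (x + t *: z, r + t * c)].
exists B.
  split=> [[x r] Axr|AB]; first by exists x, r, 0; rewrite scale0r mul0r !addr0.
  have A00 : A (0, 0) by case: A0 => -[x r] /(sA 0); rewrite scale0r mul0r.
  by apply: (Nz c); apply: AB; exists 0, 0, 1; rewrite scale1r mul1r !add0r.
split.
- move=> x r s [x1 [r1 [t1 [A1 [-> ->]]]]] [x2 [r2 [t2 [A2 [e ->]]]]].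
  have [t12|t12] := eqVneq t1 t2.
    rewrite t12 in e *; have x12 : x1 = x2 := addIr _ e.
    by rewrite x12 in A1; rewrite (fA _ _ _ A1 A2).
  (* Otherwise z = (t1 - t2)^-1 *: (x2 - x1) would lie in the domain of A. *)
  exfalso; apply: (Nz ((t1 - t2)^-1 * (r2 - r1))).
  have dx : x2 - x1 = (t1 - t2) *: z.
    by rewrite scalerBl -[x2](addrK (t2 *: z)) -e addrAC [x1 + _]addrC addrK.
  have -> : z = (t1 - t2)^-1 *: (x2 - x1) by rewrite dx scalerA mulVf ?subr_eq0 // scale1r.
  by apply: (sA); apply: addA A2 _; have := sA (-1) _ _ A1; rewrite scaleN1r mulN1r.
- move=> x r y s [x1 [r1 [t1 [A1 [-> ->]]]]] [x2 [r2 [t2 [A2 [-> ->]]]]].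
  exists (x1 + x2), (r1 + r2), (t1 + t2); split; first exact: addA.
  by rewrite scalerDl mulrDl; congr (_, _); rewrite addrACA.
- move=> a x r [x1 [r1 [t1 [A1 [-> ->]]]]].
  exists (a *: x1), (a * r1), (a * t1); split; first exact: sA.
  by rewrite scalerDr mulrDr scalerA mulrA.
- move=> x r [x1 [r1 [t1 [A1 [-> ->]]]]].
  exact: extension_dominated dA cge cle _ _ _ A1.
Qed.

Theorem hahn_banach (A0 : set (V * R)) : dominated_graph A0 -> A0 !=set0 ->
  exists f : {linear V -> R^o},
    (forall x r, A0 (x, r) -> f x = r) /\ forall x, f x <= p x.
Proof.
move=> dA0 A00.
(* Requiring A0 `<=` A only of nonempty A lets the empty chain have an upper
   bound in Zorn's lemma. *)
pose P A := dominated_graph A /\ (A !=set0 -> A0 `<=` A).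
have chainP F : F `<=` P -> total_on F subset -> P (\bigcup_(A in F) A).
  move=> FP Ftot; split; first by apply: dominated_graph_bigcup => // A /FP[].
  move=> [u [A FA Au]] v A0v; exists A => //.
  by apply: (FP A FA).2 => //; exists u.
have [A [[dA seedA] maxA]] := Zorn_bigcup chainP.
have A0A : A0 `<=` A.
  have [A_0|/set0P A_nz] := eqVneq A set0; last exact: seedA.
  exfalso; apply: (maxA A0); last by split => // _.
  by rewrite A_0; split => // A0_0; case: A00 => u /A0_0.
have [fA addA sA domA] := dA.
have A_nz : A !=set0 by case: A00 => u /A0A; exists u.
have totA z : exists r, A (z, r).
  apply: contrapT => Nz.
  have [B AB dB] := dominated_graph_extend dA A_nz (fun r Azr => Nz (ex_intro _ r Azr)).
  by apply: (maxA B AB); split => // _; apply: subset_trans A0A (properW AB).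
pose f z := projT1 (cid (totA z)).
have Af z : A (z, f z) by rewrite /f; case: cid.
have lin_f : linear_for *:%R f.
  by move=> a x y; apply: (fA (a *: x + y)) => //; apply: addA => //; exact: sA.
exists (HB.pack_for {linear V -> R^o} f (GRing.isLinear.Build R V R^o *:%R f lin_f)).
by split => [x r /A0A|x] /=; [exact: fA | exact: domA].
Qed.

Lemma sublinear_norming y0 :
  exists f : {linear V -> R^o}, f y0 = p y0 /\ forall x, f x <= p x.
Proof.
have [||f [fy0 fp]] := @hahn_banach [set (t *: y0, t * p y0) | t in [set: R]].
- split.
  + move=> _ r s [t _ [<- <-]] [u _ [e <-]].
    have [->//|tu] := eqVneq t u.
    have : (t - u) *: y0 = 0 by rewrite scalerBl e subrr.
    by move/eqP; rewrite scaler_eq0 subr_eq0 (negbTE tu) /= => /eqP ->; rewrite p0 !mulr0.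
  + move=> _ _ _ _ [t _ [<- <-]] [u _ [<- <-]].
    by exists (t + u) => //; rewrite scalerDl mulrDl.
  + by move=> a _ _ [t _ [<- <-]]; exists (a * t) => //; rewrite scalerA mulrA.
  + move=> _ _ [t _ [<- <-]].
    have [t0|t0] := leP 0 t; first by rewrite pZ.
    have := pN ((- t) *: y0); rewrite pZ ?oppr_ge0 ?(ltW t0) // scaleNr opprK; lra.
- by exists (1 *: y0, 1 * p y0), 1.
- by exists f; split => //; apply: fy0; exists 1; rewrite ?scale1r ?mul1r.
Qed.
End HahnBanach.

Definition realify (R : realType) (Y : lmodType R[i]) : Type := Y.

Section Realify.
Variables (R : realType) (Y : lmodType R[i]).

HB.instance Definition _ := GRing.Zmodule.on (realify Y).

Let rscale (r : R) (y : realify Y) : realify Y := r%:C *: (y : Y).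

Let rscaleA a b v : rscale a (rscale b v) = rscale (a * b) v.
Proof. by rewrite /rscale scalerA -rmorphM. Qed.

Let rscale1 : left_id 1 rscale.
Proof. by move=> v; rewrite /rscale rmorph1 scale1r. Qed.

Let rscaleDr : right_distributive rscale +%R.
Proof. by move=> a u v; rewrite /rscale scalerDr. Qed.

Let rscaleDl v : {morph rscale^~ v : a b / a + b}.
Proof. by move=> a b; rewrite /rscale rmorphD scalerDl. Qed.

HB.instance Definition _ :=
  GRing.Zmodule_isLmodule.Build R (realify Y) rscaleA rscale1 rscaleDr rscaleDl.

Lemma realify_scaleE (r : R) (y : realify Y) : r *: y = (r%:C *: (y : Y) : Y).
Proof. by []. Qed.

End Realify.

Section ComplexFacts.
Variable R : realType.

Lemma normrE_Re (V : normedZmodType R[i]) (v : V) : `|v| = (Re `|v|)%:C.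
Proof. by have := ger0_Im (normr_ge0 v); case: `|v| => a b /= ->. Qed.

Lemma normc_le_Re_real (w : R[i]) : `|w| <= (Re w)%:C -> w = (Re w)%:C.
Proof.
move=> le_wRe.
have Re_ge0 : 0 <= Re w.
  by have := le_trans (normc_ge_Re w) le_wRe; rewrite lecR; apply: le_trans.
have nw : `|w| = (Re w)%:C.
  by apply/le_anti; rewrite le_wRe /=; have := normc_ge_Re w; rewrite ger0_norm.
have /eqP : Im w ^+ 2 = 0.
  by have := add_Re2_Im2 w; rewrite nw -rmorphXn => /complexI; lra.
by rewrite sqrf_eq0 => /eqP Im0; case: w {le_wRe Re_ge0 nw} Im0 => a b /= ->.
Qed.

Lemma unit_rotation (w : R[i]) : exists2 c : R[i], `|c| = 1 & c * w = `|w|.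
Proof.
have [->|w0] := eqVneq w 0; first by exists 1; rewrite ?normr1 // mulr0 normr0.
by exists (`|w| / w); [rewrite normf_div normr_id divff ?normr_eq0 | rewrite mulfVK].
Qed.

End ComplexFacts.

Section Complexify.
Variables (R : realType) (Y : normedModType R[i]).

Definition complexify (f : realify Y -> R) (v : Y) : R[i]^o :=
  (f v)%:C - 'i * (f ('i *: v))%:C.

Lemma Re_complexify (f : realify Y -> R) v : Re (complexify f v) = f v.
Proof. by rewrite /complexify /=; ring. Qed.

Lemma complexify_is_linear (f : {linear realify Y -> R^o}) :
  linear_for *:%R (complexify f).
Proof.
have fZr (r : R) (v : Y) : f (r%:C *: v) = r * f v by rewrite -realify_scaleE linearZ.
have FD u v : complexify f (u + v) = complexify f u + complexify f v.
  by rewrite /complexify scalerDr !linearD !rmorphD; ring.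
have FZr (r : R) v : complexify f (r%:C *: v) = r%:C * complexify f v.
  rewrite /complexify scalerA (mulrC 'i r%:C) -scalerA !fZr !rmorphM; ring.
have Fi v : complexify f ('i *: v) = 'i * complexify f v.
  rewrite /complexify scalerA -expr2 sqr_i scaleN1r linearN rmorphN /=.
  by rewrite mulrBr mulrA -expr2 sqr_i; ring.
have FZ a v : complexify f (a *: v) = a * complexify f v.
  by rewrite [a]complexE scalerDl FD FZr -scalerA Fi FZr mulrDl mulrA.
by move=> a u v; rewrite FD FZ.
Qed.

HB.instance Definition _ (f : {linear realify Y -> R^o}) :=
  GRing.isLinear.Build R[i] Y R[i]^o *:%R (complexify f) (complexify_is_linear f).

Lemma complexify_norm_le (f : {linear realify Y -> R^o}) :
  (forall v, f v <= Re `|(v : Y)|) -> forall v, `|complexify f v| <= `|v|.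
Proof.
(* A unimodular c makes complexify f (c *: v) real, hence equal to f (c *: v). *)
move=> fle v; have [c c1 cF] := unit_rotation (complexify f v).
have rot : `|complexify f v| = complexify f (c *: v) by rewrite linearZ.
have real_rot : complexify f (c *: v) = (f (c *: v))%:C.
  by rewrite -Re_complexify -rot -normrE_Re.
rewrite rot real_rot [`|v|]normrE_Re lecR; apply: le_trans (fle _) _.
by rewrite normrZ c1 mul1r.
Qed.

End Complexify.

Lemma complex_norming_functionals (R : realType) : norming_functionals R[i].
Proof.
move=> Y y; pose p (v : realify Y) := Re `|(v : Y)|.
have pD u v : p (u + v) <= p u + p v.
  have := ler_normD (u : Y) v; rewrite [`|_ + _|]normrE_Re.
  by rewrite (normrE_Re (u : Y)) (normrE_Re (v : Y)) -rmorphD lecR.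
have pZ a v : 0 <= a -> p (a *: v) = a * p v.
  move=> a0; rewrite /p realify_scaleE normrZ ger0_norm ?ler0c //.
  by rewrite [`|(v : Y)|]normrE_Re -rmorphM.
have [f [fy fle]] := sublinear_norming pD pZ y.
exists (complexify f); split; last exact: complexify_norm_le.
rewrite [`|y|]normrE_Re -/(p y) -fy -Re_complexify; apply: normc_le_Re_real.
by rewrite Re_complexify fy /p -normrE_Re complexify_norm_le.
Qed.

Lemma real_nonneg_sup_complete (R : realType) : nonneg_sup_complete R.
Proof.
move=> A A_nz [b A_bd]; have supA : has_sup A by split => //; exists b => a /A_bd/andP[].
by exists (sup A); split => [|u]; [exact: sup_upper_bound | exact: ge_sup].
Qed.

Lemma complex_nonneg_sup_complete (R : realType) : nonneg_sup_complete R[i].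
Proof.
move=> A [a0 Aa0] [b A_bd].
have realE (u : R[i]) : 0 <= u -> u = (Re u)%:C by move/ger0_Im; case: u => ? ? /= ->.
have supReA : has_sup [set Re a | a in A].
  split; first by exists (Re a0), a0.
  exists (Re b) => _ [a Aa <-].
  by have /andP[_] := A_bd a Aa; rewrite lecE => /andP[].
exists (sup [set Re a | a in A])%:C; split => [a Aa|u u_ub].
  have /andP[a_ge0 _] := A_bd a Aa.
  by rewrite (realE a a_ge0) lecR; apply: sup_upper_bound => //; exists a.
have u_ge0 : 0 <= u by apply: le_trans (u_ub a0 Aa0); case/andP: (A_bd a0 Aa0).
rewrite (realE u u_ge0) lecR; apply: ge_sup => [|_ [a Aa <-]]; first by case: supReA.
by have := u_ub a Aa; rewrite lecE => /andP[].
Qed.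

Lemma real_norming_functionals (R : realType) : norming_functionals R.
Proof.
move=> Y y.
have pZ a (v : Y) : 0 <= a -> `|a *: v| = a * `|v| by move=> a0; rewrite normrZ ger0_norm.
have [f [fy fle]] := sublinear_norming (@ler_normD _ Y) pZ y.
exists f; split => // x; rewrite ler_norml fle andbT lerNl -linearN.
by apply: le_trans (fle _) _; rewrite normrN.
Qed.

Theorem proposition2p1 (R : realType) :
  (* real scalars K = R *)
  (forall (X Y : completeNormedModType R) (G T : {linear X -> Y}),
      continuous G -> continuous T -> opnorm G = 1 ->
      is_max [set `|l| | l in SG G T] (Gnorm G T) /\
      is_max (SGt G T) (Gnorm G T)) /\
  (* complex scalars K = R[i] *)
  (forall (X Y : completeNormedModType R[i]) (G T : {linear X -> Y}),
      continuous G -> continuous T -> opnorm G = 1 ->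
      is_max [set `|l| | l in SG G T] (Gnorm G T) /\
      is_max (SGt G T) (Gnorm G T)).
Proof.
split=> X Y G T _ cT nG.
- exact: (Gnorm_attained (@real_nonneg_sup_complete R) (@real_norming_functionals R) cT nG).
- exact: (Gnorm_attained (@complex_nonneg_sup_complete R)
                         (@complex_norming_functionals R) cT nG).
Qed.
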